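(* Let $L>0$ and let $a\in C^1_{\mathrm{pw}}[-L,L]$ with $a\ge a_{\min}>0$, and let $-L=z_0<\dots<z_N=L$ be a partition such that $a\in C^1[z_{j-1},z_j]$ and $a'$ is either $>0$ throughout or $\le0$ throughout on each $\tau_j=(z_{j-1},z_j)$. Define $\tilde a$ on each $\tau_j$ by $\tilde a=a$ if $a'>0$ on $\tau_j$, and $\tilde a\equiv a^+(z_{j-1})$ if $a'\le0$ on $\tau_j$ (right-continuous at $z_j$, $j<N$, left-continuous at $z_N$). Then $\mathrm{Var}(\tilde a)\le\mathrm{Var}(a)$. The analogous statement holds for a function $c$ of the same type.
   Context: $C^1_{\mathrm{pw}}[-L,L]$ is the set of $g:[-L,L]\to\mathbb{R}$ for which there is a finite partition $-L=z_0<\dots<z_N=L$ with $g\in C^1[z_{j-1},z_j]$ for each $j$ and, on each $(z_{j-1},z_j)$, either $g'>0$ throughout or $g'\le0$ throughout. For $g$ and such a partition: $g^\pm(z_j)$ are the right/left one-sided limits, $[g]_{z_j}=g^-(z_j)-g^+(z_j)$ for $1\le j\le N-1$, $\partial_{\mathrm{pw}}g=g'$ on each $(z_{j-1},z_j)$, and $\mathrm{Var}(g)=\sum_{\ell=1}^{N-1}|[g]_{z_\ell}|+\int_{-L}^L|\partial_{\mathrm{pw}}g(s)|\,ds$ (here computed with respect to the partition above). *)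

From HB Require Import structures.
From mathcomp Require Import all_boot all_order all_algebra.
From mathcomp Require Import all_classical all_reals all_analysis.
Set Implicit Arguments. Unset Strict Implicit. Unset Printing Implicit Defensive.
Import Order.TTheory GRing.Theory Num.Theory.
Import numFieldNormedType.Exports.
Local Open Scope classical_set_scope.
Local Open Scope ring_scope.

Section Defs.
Variable R : realType.

Definition rlim (g : R -> R) (c : R) : R := lim (g x @[x --> c^'+]).
Definition llim (g : R -> R) (c : R) : R := lim (g x @[x --> c^'-]).

Definition C1_closed (g : R -> R) (u v : R) : Prop :=
  exists f f' : R -> R,
    {in `]u, v[, g =1 f} /\
    {within `[u, v], continuous f} /\
    {within `[u, v], continuous f'} /\
    (forall x, x \in `]u, v[ -> is_derive x 1 f (f' x)).

Definition deriv_pos_on (g : R -> R) (u v : R) : Prop :=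
  forall x, x \in `]u, v[ -> 0 < derive1 g x.
Definition deriv_nonpos_on (g : R -> R) (u v : R) : Prop :=
  forall x, x \in `]u, v[ -> derive1 g x <= 0.

Definition pw_partition (L : R) (g : R -> R) (z : nat -> R) (N : nat) : Prop :=
  z 0%N = - L /\ z N = L /\ (forall j, (j < N)%N -> z j < z j.+1) /\
  (forall j, (1 <= j <= N)%N ->
     C1_closed g (z j.-1) (z j) /\
     (deriv_pos_on g (z j.-1) (z j) \/ deriv_nonpos_on g (z j.-1) (z j))).

(* Var(g) with respect to the partition z_0 < ... < z_N:
   sum of |[g]_{z_l}| for 1 <= l <= N-1, plus the integral over [-L,L] of
   |d_pw g|, d_pw g = g' on each open piece (split along the pieces). *)
Definition Var (g : R -> R) (z : nat -> R) (N : nat) : R :=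
  (\sum_(1 <= l < N) `|llim g (z l) - rlim g (z l)|) +
  (\sum_(1 <= j < N.+1)
      Rintegral lebesgue_measure `](z j.-1), (z j)[ (fun x => `|derive1 g x|)).

(* index j in 1..N of the piece [z_{j-1}, z_j) containing x (N if x = z_N) *)
Definition piece (z : nat -> R) (N : nat) (x : R) : nat :=
  \max_(1 <= j < N.+1 | z j.-1 <= x) j.

Definition atilde (a : R -> R) (z : nat -> R) (N : nat) (x : R) : R :=
  let j := piece z N x in
  if `[< deriv_pos_on a (z j.-1) (z j) >] then
    (if (z j.-1 < x < z j) then a x
     else if x == z N then llim a (z N) else rlim a (z j.-1))
  else rlim a (z j.-1).

End Defs.

From HB Require Import structures.
From mathcomp Require Import all_boot all_order all_algebra.
From mathcomp Require Import all_classical all_reals all_analysis.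
From mathcomp Require Import zify.

Set Implicit Arguments.
Unset Strict Implicit.
Unset Printing Implicit Defensive.
Import Order.TTheory GRing.Theory Num.Theory.
Import numFieldNormedType.Exports.
Local Open Scope classical_set_scope.
Local Open Scope ring_scope.

(* On a piece where [a' > 0] nothing changes.  On a piece [tau_l] where
   [a' <= 0] the function is frozen to [a^+(z_{l-1})]: its integral term
   vanishes, and the jump at [z_l] becomes [|a^+(z_{l-1}) - a^+(z_l)|]
   (right limits never change).  By the triangle inequality through
   [a^-(z_l)] this is at most [int_{tau_l} |a'| + |[a]_{z_l}|], the
   fundamental theorem of calculus bounding [|a^-(z_l) - a^+(z_{l-1})|].
   So [Var] decreases term by term, pairing each jump with the integral over
   the piece to its left. *)

Lemma ler_sum_pieces {R : numDomainType} (J J' I I' : nat -> R) N :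
  (forall l, (1 <= l < N)%N -> J l + I l <= J' l + I' l) ->
  ((0 < N)%N -> I N <= I' N) ->
  \sum_(1 <= l < N) J l + \sum_(1 <= j < N.+1) I j <=
  \sum_(1 <= l < N) J' l + \sum_(1 <= j < N.+1) I' j.
Proof.
move=> le_pieces le_last.
have [->|N_gt0] := posnP N; first by rewrite !big_geq.
rewrite !big_nat_recr //= !addrA -!big_split lerD ?le_last //.
exact: ler_sum_nat.
Qed.

Section one_sided_limits.
Context {R : realType}.
Implicit Types (f g h : R -> R) (c u v : R).

Definition abs_deriv_integral g u v : R :=
  Rintegral lebesgue_measure `]u, v[ (fun x => `|derive1 g x|).

Lemma near_right_itvoo u v : u < v -> \forall x \near u^'+, x \in `]u, v[.
Proof.
move=> uv; near=> x; rewrite in_itv/=; apply/andP; split; near: x.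
  exact: nbhs_right_gt.
exact: nbhs_right_lt.
Unshelve. all: by end_near. Qed.

Lemma near_left_itvoo u v : u < v -> \forall x \near v^'-, x \in `]u, v[.
Proof.
move=> uv; near=> x; rewrite in_itv/=; apply/andP; split; near: x.
  exact: nbhs_left_gt.
exact: nbhs_left_lt.
Unshelve. all: by end_near. Qed.

Lemma eq_rlim_in g h u v : u < v -> {in `]u, v[, g =1 h} ->
  rlim g u = rlim h u.
Proof.
move=> uv gh; rewrite /rlim; congr lim; apply/seteqP.
by split; apply: near_eq_cvg; near=> x; rewrite gh//; near: x;
  exact: near_right_itvoo.
Unshelve. all: by end_near. Qed.

Lemma eq_llim_in g h u v : u < v -> {in `]u, v[, g =1 h} ->
  llim g v = llim h v.
Proof.
move=> uv gh; rewrite /llim; congr lim; apply/seteqP.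
by split; apply: near_eq_cvg; near=> x; rewrite gh//; near: x;
  exact: near_left_itvoo.
Unshelve. all: by end_near. Qed.

Lemma rlim_cst_in g c u v : u < v -> {in `]u, v[, forall x, g x = c} ->
  rlim g u = c.
Proof.
move=> uv gc; rewrite /rlim; apply: lim_near_cst => //.
by near=> x; apply: gc; near: x; exact: near_right_itvoo.
Unshelve. all: by end_near. Qed.

Lemma llim_cst_in g c u v : u < v -> {in `]u, v[, forall x, g x = c} ->
  llim g v = c.
Proof.
move=> uv gc; rewrite /llim; apply: lim_near_cst => //.
by near=> x; apply: gc; near: x; exact: near_left_itvoo.
Unshelve. all: by end_near. Qed.

Lemma rlim_within_itv f u v : u < v -> {within `[u, v], continuous f} ->
  rlim f u = f u.
Proof. by move=> uv /(continuous_within_itvP _ uv)[_ fu _]; exact: cvg_lim. Qed.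

Lemma llim_within_itv f u v : u < v -> {within `[u, v], continuous f} ->
  llim f v = f v.
Proof. by move=> uv /(continuous_within_itvP _ uv)[_ _ fv]; exact: cvg_lim. Qed.

Lemma eq_derive1_in g h u v x : {in `]u, v[, g =1 h} -> x \in `]u, v[ ->
  derive1 g x = derive1 h x.
Proof.
move=> gh xuv; rewrite !derive1E; apply: near_eq_derive.
by near=> y; apply: gh; near: y; exact: near_in_itvoo.
Unshelve. all: by end_near. Qed.

Lemma eq_abs_deriv_integral_in g h u v : {in `]u, v[, g =1 h} ->
  abs_deriv_integral g u v = abs_deriv_integral h u v.
Proof.
by move=> gh; apply: eq_Rintegral => x; rewrite inE => /(eq_derive1_in gh) ->.
Qed.

Lemma abs_deriv_integral_cst_in g c u v : {in `]u, v[, forall x, g x = c} ->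
  abs_deriv_integral g u v = 0.
Proof.
move=> gc; rewrite (@eq_abs_deriv_integral_in _ (cst c)) //.
rewrite /abs_deriv_integral (@eq_Rintegral _ _ _ _ _ (cst 0)).
  by rewrite Rintegral_cst ?mul0r.
by move=> x _; rewrite derive1_cst normr0.
Qed.

Lemma C1_closed_jump_le g u v : u < v -> C1_closed g u v ->
  `|llim g v - rlim g u| <= abs_deriv_integral g u v.
Proof.
move=> uv [f [f' [gf [cf [cf' df]]]]].
rewrite (eq_rlim_in uv gf) (eq_llim_in uv gf) (rlim_within_itv uv cf).
rewrite (llim_within_itv uv cf) (eq_abs_deriv_integral_in gf).
have f'E : {in `]u, v[, derive1 f =1 f'}.
  by move=> x /df f'x; rewrite derive1E derive_val.
have [_ fu fv] := (continuous_within_itvP _ uv).1 cf.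
have f_LR : derivable_oo_LRcontinuous f u v.
  by split => // x /df f'x; exact: (@ex_derive _ _ _ _ _ _ _ f'x).
have int_f' : lebesgue_measure.-integrable `]u, v[ (EFin \o f').
  have : lebesgue_measure.-integrable `[u, v] (EFin \o f').
    by apply: continuous_compact_integrable => //; exact: segment_compact.
  by apply: integrableS => //; exact: subset_itv_oo_cc.
have FTC : \int[lebesgue_measure]_(x in `]u, v[) f' x = f v - f u.
  rewrite /Rintegral -(@integral_itv_bndoo _ _ _ _ true false).
    by rewrite (continuous_FTC2 uv cf' f_LR f'E).
  exact: measurable_int int_f'.
have -> : abs_deriv_integral f u v =
    \int[lebesgue_measure]_(x in `]u, v[) `|f' x|.
  by apply: eq_Rintegral => x; rewrite inE => /f'E ->.
by rewrite -FTC; exact: le_normr_Rintegral.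
Qed.

End one_sided_limits.

Section partition.
Context {R : realType}.
Variables (z : nat -> R) (N : nat).
Hypothesis z_lt_succ : forall j, (j < N)%N -> z j < z j.+1.

Lemma partition_lt i j : (i < j <= N)%N -> z i < z j.
Proof.
move=> /andP[+ jN]; elim: j jN => [|j IHj jN] //.
rewrite ltnS leq_eqVlt => /orP[/eqP ->|ij]; first exact: z_lt_succ.
by apply: lt_trans (z_lt_succ jN); apply: IHj ij; exact: ltnW.
Qed.

Lemma piece_lt j : (1 <= j <= N)%N -> z j.-1 < z j.
Proof.
by move=> /andP[j1 jN]; apply: partition_lt; rewrite jN andbT prednK.
Qed.

Lemma piece_itvoo j x : (1 <= j <= N)%N -> x \in `](z j.-1), (z j)[ ->
  piece z N x = j.
Proof.
move=> /andP[j1 jN]; rewrite in_itv/= => /andP[zx xz].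
apply/eqP; rewrite eqn_leq; apply/andP; split.
  apply/bigmax_leqP_seq => i; rewrite mem_index_iota => /andP[i1 iN] zix.
  rewrite leqNgt; apply/negP => ji.
  have : z j <= z i.-1.
    have [<-|ji'] : j = i.-1 \/ (j < i.-1)%N by lia.
      exact: lexx.
    by apply/ltW/partition_lt; lia.
  by move=> /(lt_le_trans xz); rewrite ltNge zix.
apply: (@leq_bigmax_seq _ _ (fun i => z i.-1 <= x) id j).
  by rewrite mem_index_iota j1 ltnS.
exact: ltW.
Qed.

End partition.

Section atilde.
Context {R : realType}.
Variables (a : R -> R) (z : nat -> R) (N : nat).
Hypothesis z_lt_succ : forall j, (j < N)%N -> z j < z j.+1.

Let increasing j := `[< deriv_pos_on a (z j.-1) (z j) >].
Let ta := atilde a z N.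

Lemma atilde_itvoo j x : (1 <= j <= N)%N -> x \in `](z j.-1), (z j)[ ->
  ta x = if increasing j then a x else rlim a (z j.-1).
Proof.
move=> hj xj; rewrite /ta /atilde (piece_itvoo z_lt_succ hj xj).
by move: xj; rewrite in_itv/= => ->; case: ifP.
Qed.

Lemma abs_deriv_integral_atilde j : (1 <= j <= N)%N ->
  abs_deriv_integral ta (z j.-1) (z j) =
  if increasing j then abs_deriv_integral a (z j.-1) (z j) else 0.
Proof.
move=> hj; case: ifPn => incj.
  by apply: eq_abs_deriv_integral_in => x /(atilde_itvoo hj) ->; rewrite incj.
apply: (@abs_deriv_integral_cst_in _ _ (rlim a (z j.-1))).
by move=> x /(atilde_itvoo hj) ->; rewrite (negbTE incj).
Qed.

Lemma llim_atilde j : (1 <= j <= N)%N ->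
  llim ta (z j) = if increasing j then llim a (z j) else rlim a (z j.-1).
Proof.
move=> hj; have zj := piece_lt z_lt_succ hj; case: ifPn => incj.
  by apply: (eq_llim_in zj) => x /(atilde_itvoo hj) ->; rewrite incj.
by apply: (llim_cst_in zj) => x /(atilde_itvoo hj) ->; rewrite (negbTE incj).
Qed.

Lemma rlim_atilde l : (l < N)%N -> rlim ta (z l) = rlim a (z l).
Proof.
move=> lN; have hl : (1 <= l.+1 <= N)%N by rewrite ltnS leq0n.
have zl := z_lt_succ lN; case: (boolP (increasing l.+1)) => incl.
  by apply: (eq_rlim_in zl) => x /(atilde_itvoo hl) ->; rewrite incl.
by apply: (rlim_cst_in zl) => x /(atilde_itvoo hl) ->; rewrite (negbTE incl).
Qed.

Lemma abs_deriv_integral_atilde_le j : (1 <= j <= N)%N ->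
  abs_deriv_integral ta (z j.-1) (z j) <= abs_deriv_integral a (z j.-1) (z j).
Proof.
move=> hj; rewrite abs_deriv_integral_atilde //.
by case: ifP => _ //; exact: Rintegral_ge0.
Qed.

Lemma jump_abs_deriv_integral_atilde_le l : (1 <= l < N)%N ->
  C1_closed a (z l.-1) (z l) ->
  `|llim ta (z l) - rlim ta (z l)| + abs_deriv_integral ta (z l.-1) (z l) <=
  `|llim a (z l) - rlim a (z l)| + abs_deriv_integral a (z l.-1) (z l).
Proof.
move=> /andP[l1 lN] a_C1; have hl : (1 <= l <= N)%N by rewrite l1 (ltnW lN).
rewrite (rlim_atilde lN) (llim_atilde hl) (abs_deriv_integral_atilde hl).
case: ifP => _ //; rewrite addr0 [X in _ <= X]addrC.
apply: le_trans (ler_distD (llim a (z l)) _ _) _.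
rewrite lerD2r distrC.
exact: C1_closed_jump_le (piece_lt z_lt_succ hl) a_C1.
Qed.

End atilde.

Theorem proposition5p6 (R : realType) (L amin : R) (a : R -> R)
    (z : nat -> R) (N : nat) :
  0 < L -> 0 < amin ->
  (forall x, x \in `[- L, L] -> amin <= a x) ->
  pw_partition L a z N ->
  Var (atilde a z N) z N <= Var a z N.
Proof.
move=> _ _ _ [_ [_ [z_lt_succ a_pw]]].
apply: ler_sum_pieces => [l /andP[l1 lN]|].
  have [a_C1 _] := a_pw l (introT andP (conj l1 (ltnW lN))).
  by apply: (jump_abs_deriv_integral_atilde_le z_lt_succ); rewrite ?l1.
move=> N_gt0; apply: (abs_deriv_integral_atilde_le a z_lt_succ).
by rewrite N_gt0 leqnn.
Qed.
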